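(* Let $R$ be a commutative ring with identity, let $A$ be a $2\times 2$ matrix over $R$, and let $\mathbf u$ be a unimodular row of length $2$ over $R$. Then $\mathbf u$ belongs to the submodule of $R^2$ generated by the rows of $A$ if and only if there exists an invertible $2\times 2$ matrix $P$ over $R$ such that $\mathbf u$ is the first row of $PA$.
   Context: A row $[r_1,\dots,r_n]$ over $R$ is unimodular if $r_1,\dots,r_n$ generate the unit ideal $R$. *)

From HB Require Import structures.
From mathcomp Require Import all_boot all_order all_algebra.
Set Implicit Arguments. Unset Strict Implicit. Unset Printing Implicit Defensive.
Import GRing.Theory.
Local Open Scope ring_scope.

Definition unimodular_row (R : comPzRingType) (n : nat) (u : 'rV[R]_n) : Prop :=
  exists c : 'rV[R]_n, \sum_(i < n) c 0 i * u 0 i = 1.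

Definition in_row_module (R : comPzRingType) (n m : nat)
    (u : 'rV[R]_m) (A : 'M[R]_(n, m)) : Prop :=
  exists x : 'rV[R]_n, u = x *m A.

Definition invertible_mx (R : comPzRingType) (n : nat) (P : 'M[R]_n) : Prop :=
  exists Q : 'M[R]_n, P *m Q = 1%:M /\ Q *m P = 1%:M.

From HB Require Import structures.
From mathcomp Require Import all_boot all_order all_algebra.
From mathcomp Require Import ring.
Local Open Scope ring_scope.
Import GRing.Theory.

(* If u = x A, then the entries of x generate the unit ideal as well, so x
   completes to a matrix P of determinant 1; P is invertible by its adjugate
   and the first row of P A is x A = u. *)

Section UnimodularRow.

Context {R : comPzRingType}.

Lemma unimodular_rowP {n} (u : 'rV[R]_n) :
  unimodular_row u <-> exists v : 'cV[R]_n, u *m v = 1%:M.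
Proof.
split=> [[c cu1] | [v uv1]].
  exists c^T; apply/matrixP => i j; rewrite (ord1 i) (ord1 j) !mxE -cu1 /=.
  by apply: eq_bigr => k _; rewrite mxE mulrC.
exists v^T; move/matrixP/(_ 0 0): uv1; rewrite !mxE eqxx mulr1n => <-.
by apply: eq_bigr => k _; rewrite mxE mulrC.
Qed.

Lemma unimodular_row_mulmx {n m} (x : 'rV[R]_n) (A : 'M[R]_(n, m)) :
  unimodular_row (x *m A) -> unimodular_row x.
Proof.
by move=> /unimodular_rowP[v xAv1]; apply/unimodular_rowP; exists (A *m v);
  rewrite mulmxA.
Qed.

Lemma sum_ord2 (V : nmodType) (F : 'I_2 -> V) : \sum_(i < 2) F i = F 0 + F 1.
Proof. by rewrite big_ord_recl big_ord1; congr (_ + F _); exact: val_inj. Qed.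

Lemma det_mx22 (M : 'M[R]_2) : \det M = M 0 0 * M 1 1 - M 0 1 * M 1 0.
Proof.
rewrite (expand_det_row _ 0) big_ord_recl big_ord1 /cofactor !det_mx11 !mxE /=.
have -> : lift 0 0 = 1 :> 'I_2 by exact: val_inj.
have -> : lift 1 0 = 0 :> 'I_2 by exact: val_inj.
ring.
Qed.

Lemma det1_invertible_mx {n} (P : 'M[R]_n) :
  \det P = 1 -> invertible_mx P.
Proof. by move=> detP1; exists (\adj P); rewrite mul_mx_adj mul_adj_mx detP1. Qed.

Lemma unimodular_row2_completion (x : 'rV[R]_2) :
  unimodular_row x -> exists P : 'M[R]_2, \det P = 1 /\ row 0 P = x.
Proof.
move=> [c cx1].
exists (\matrix_(i, j) if i == 0 then x 0 j else if j == 0 then - c 0 1 else c 0 0).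
split; last by apply/rowP => j; rewrite !mxE.
by rewrite det_mx22 !mxE /= -cx1 sum_ord2; ring.
Qed.

End UnimodularRow.

Theorem lemma2p3 (R : comPzRingType) (A : 'M[R]_2) (u : 'rV[R]_2) :
  unimodular_row u ->
  (in_row_module u A <->
   exists P : 'M[R]_2, invertible_mx P /\ row 0 (P *m A) = u).
Proof.
move=> u_unimodular; split=> [[x u_xA] | [P [_ <-]]]; last first.
  by exists (row 0 P); rewrite row_mul.
move: u_unimodular; rewrite u_xA => /unimodular_row_mulmx.
move=> /unimodular_row2_completion[P [detP1 P0x]].
by exists P; split; [exact: det1_invertible_mx | rewrite row_mul P0x].
Qed.
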